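(* Let $\mathcal{H}=\bigotimes_{a=1}^N\mathcal{H}_a$ be a finite-dimensional multipartite Hilbert space, let $\mathcal{N}=\{\mathcal{N}_k\}_{k=1}^M$ be a non-trivial neighborhood structure, and let $\rho\in\mathcal{D}(\mathcal{H})$. Then every state $\sigma$ in the joining set $\mathcal{M}_{\mathcal{N}}(\rho)$ satisfies $\mathrm{supp}(\sigma)\subseteq\mathcal{H}_{\mathcal{N}}(\rho)$.
   Context: $\mathcal{H}=\bigotimes_{a=1}^N\mathcal{H}_a$ with $\dim\mathcal{H}_a=d_a<\infty$; $\mathcal{D}(\mathcal{H})$ is the set of density operators (positive semidefinite, trace one) on $\mathcal{H}$. A neighborhood is a subset $\mathcal{N}_k\subsetneq\{1,\dots,N\}$ and a neighborhood structure is a finite collection $\mathcal{N}=\{\mathcal{N}_k\}_{k=1}^M$ of neighborhoods; it is non-trivial if every index $j\in\{1,\dots,N\}$ belongs to some $\mathcal{N}_k$ and every $\mathcal{N}_k$ overlaps (has nonempty intersection) with at least one other $\mathcal{N}_{k'}$. For a state $\rho$, $\overline{\mathcal{N}}_k$ denotes the complement of $\mathcal{N}_k$ and $\rho_{\mathcal{N}_k}=\mathrm{tr}_{\overline{\mathcal{N}}_k}(\rho)$ is the reduced density matrix on $\mathcal{N}_k$. The joining set is $\mathcal{M}_{\mathcal{N}}(\rho)=\{\sigma\in\mathcal{D}(\mathcal{H}):\mathrm{tr}_{\overline{\mathcal{N}}_k}\rho=\mathrm{tr}_{\overline{\mathcal{N}}_k}\sigma\ \forall\,\mathcal{N}_k\in\mathcal{N}\}$.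 The DQLS subspace of $\rho$ relative to $\mathcal{N}$ is $\mathcal{H}_{\mathcal{N}}(\rho)=\bigcap_{\mathcal{N}_k\in\mathcal{N}}\mathrm{supp}(\rho_{\mathcal{N}_k}\otimes I_{\overline{\mathcal{N}}_k})$. *)

From HB Require Import structures.
From mathcomp Require Import all_boot all_order all_algebra.
Set Implicit Arguments. Unset Strict Implicit. Unset Printing Implicit Defensive.
Import Order.TTheory GRing.Theory Num.Theory.
Local Open Scope ring_scope.

(* Multipartite system: N parties, party a has local dimension d a.
   The computational basis of H = (x)_a H_a is indexed by Idx d. *)
Definition Idx (N : nat) (d : 'I_N -> nat) : finType :=
  {dffun forall a : 'I_N, 'I_(d a)}.

Definition SIdx (N : nat) (d : 'I_N -> nat) (S : {set 'I_N}) : finType :=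
  {dffun forall a : {a : 'I_N | a \in S}, 'I_(d (val a))}.

Section Ops.
Variables (C : numClosedFieldType) (N : nat) (d : 'I_N -> nat).

(* Operators on H as matrices in the product basis; vectors as coordinate functions. *)
Definition op := Idx d -> Idx d -> C.
Definition vec := Idx d -> C.

Definition restr (S : {set 'I_N}) (i : Idx d) : SIdx d S :=
  [ffun a : {a : 'I_N | a \in S} => i (val a)].

Definition psd (A : op) : Prop :=
  forall v : vec, 0 <= \sum_(i : Idx d) \sum_(j : Idx d) (v i)^* * A i j * v j.

Definition trace (A : op) : C := \sum_(i : Idx d) A i i.

Definition density (A : op) : Prop := psd A /\ trace A = 1.

Definition ptrace (S : {set 'I_N}) (A : op) : SIdx d S -> SIdx d S -> C :=
  fun x y => \sum_(i : Idx d) \sum_(j : Idx d |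
      [&& restr S i == x, restr S j == y & restr (~: S) i == restr (~: S) j])
      A i j.

Definition tensorI (S : {set 'I_N}) (B : SIdx d S -> SIdx d S -> C) : op :=
  fun i j => if restr (~: S) i == restr (~: S) j
             then B (restr S i) (restr S j) else 0.

(* support (= range, for the Hermitian operators considered here) *)
Definition in_supp (A : op) (v : vec) : Prop :=
  exists w : vec, forall i, v i = \sum_(j : Idx d) A i j * w j.

Definition neighborhood_structure (Ns : {set {set 'I_N}}) : Prop :=
  forall K, K \in Ns -> K \proper [set: 'I_N].

Definition nontrivial (Ns : {set {set 'I_N}}) : Prop :=
  (forall j : 'I_N, exists2 K, K \in Ns & j \in K) /\
  (forall K, K \in Ns -> exists2 K', K' \in Ns & (K' != K) && (K :&: K' != set0)).

Definition joining (Ns : {set {set 'I_N}}) (rho sigma : op) : Prop :=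
  density sigma /\
  forall K, K \in Ns -> forall x y, @ptrace K rho x y = @ptrace K sigma x y.

Definition in_DQLS (Ns : {set {set 'I_N}}) (rho : op) (v : vec) : Prop :=
  forall K, K \in Ns -> in_supp (@tensorI K (@ptrace K rho)) v.

End Ops.

From HB Require Import structures.
From mathcomp Require Import all_boot all_order all_algebra.
From mathcomp Require Import ring.
Set Implicit Arguments. Unset Strict Implicit. Unset Printing Implicit Defensive.
Import Order.TTheory GRing.Theory Num.Theory.
Local Open Scope ring_scope.

(* Fix a neighborhood K and a positive semidefinite sigma.  Over bases of the
   complement of K, sigma_K (x) I = sum_(c,m) (I (x) |c><m|) sigma (I (x) |m><c|),
   so <z, (sigma_K (x) I) z> = 0 forces <w, sigma w> = 0, hence sigma w = 0, for
   every w = (I (x) |m><c|) z; as z = sum_c (I (x) |c><c|) z, the kernel of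
   sigma_K (x) I lies in that of sigma, and dually supp sigma lies in
   supp (sigma_K (x) I).  The latter only depends on the marginal sigma_K, which
   equals rho_K for sigma in the joining set. *)

Section QuadraticForm.
Variables (C : numClosedFieldType) (T : finType) (A : T -> T -> C).

Definition qform (x y : T -> C) : C := \sum_i \sum_j (x i)^* * A i j * y j.

Lemma qformDZ x y t :
  qform (fun i => x i + t * y i) (fun i => x i + t * y i) =
  qform x x + t * qform x y + t^* * qform y x + t^* * t * qform y y.
Proof.
rewrite /qform !mulr_sumr -!big_split /=; apply: eq_bigr => i _.
rewrite !mulr_sumr -!big_split /=; apply: eq_bigr => j _.
by rewrite rmorphD rmorphM /=; ring.
Qed.

Lemma conj_mid_ge0 (a b p r : C) :
  0 <= a -> 0 <= b -> 0 <= a + p + r + b -> (p + r)^* = p + r.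
Proof.
move=> a_ge0 b_ge0 /geC0_conj; rewrite !rmorphD /= (geC0_conj a_ge0) (geC0_conj b_ge0).
by rewrite -!addrA => /addrI; rewrite !addrA => /addIr.
Qed.

Hypothesis A_psd : forall v, 0 <= qform v v.

Lemma qform_conj x y : qform y x = (qform x y)^*.
Proof.
set p := qform x y; set r := qform y x.
have xx_ge0 := A_psd x; have yy_ge0 := A_psd y.
have real_sum : (p + r)^* = p + r.
  apply: (conj_mid_ge0 xx_ge0 yy_ge0).
  by have := A_psd (fun i => x i + 1 * y i); rewrite qformDZ conjC1 !mul1r.
have imag_diff : ('i * p + - 'i * r)^* = 'i * p + - 'i * r.
  apply: (conj_mid_ge0 xx_ge0 yy_ge0).
  have := A_psd (fun i => x i + 'i * y i); rewrite qformDZ conjCi.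
  by rewrite [- 'i * 'i]mulNr -expr2 sqrCi opprK mul1r.
move: real_sum imag_diff; rewrite !rmorphD !rmorphM rmorphN /= conjCi opprK.
move=> /eqP; rewrite -subr_eq0 => /eqP real_sum /eqP; rewrite -subr_eq0 => /eqP imag_diff.
have : (r - p^*) * 2 = - (p^* + r^* - (p + r))
    - 'i * (- 'i * p^* + 'i * r^* - ('i * p + - 'i * r))
    - (1 + 'i * 'i) * (p^* - r^* + p - r) by ring.
rewrite real_sum imag_diff -expr2 sqrCi subrr mulr0 oppr0 mul0r !subr0 addr0.
by move/eqP; rewrite mulf_eq0 pnatr_eq0 orbF subr_eq0 => /eqP.
Qed.

Lemma qform_isotropic x y : qform x x = 0 -> qform x y = 0.
Proof.
move=> xx0; set p := qform x y; set c := qform y y.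
have c_ge0 : 0 <= c := A_psd y.
have c1_gt0 : 0 < c + 1 by rewrite ltr_wpDl.
set t := - (p^* / (c + 1)).
have := A_psd (fun i => x i + t * y i).
have tc : t^* = - (p / (c + 1)).
  by rewrite rmorphN fmorph_div /= conjCK rmorphD /= (geC0_conj c_ge0) rmorph1.
rewrite qformDZ xx0 (qform_conj x y) -/p -/c tc.
have -> : 0 + t * p + - (p / (c + 1)) * p^* + - (p / (c + 1)) * t * c
    = - (p * p^*) * ((c + 2) / (c + 1) ^+ 2) by rewrite /t; field; rewrite gt_eqF.
rewrite mulNr oppr_ge0 pmulr_lle0 ?divr_gt0 ?exprn_gt0 ?ltr_wpDl // => pp_le0.
by apply/eqP; rewrite -mul_conjC_eq0 eq_le pp_le0 mul_conjC_ge0.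
Qed.

End QuadraticForm.

Lemma sum_enum_val (V : nmodType) (T : finType) (F : T -> V) :
  \sum_(k < #|T|) F (enum_val k) = \sum_(x : T) F x.
Proof. by rewrite -(big_enum_val (A := predT)); apply: eq_bigl. Qed.

Section RangeInclusion.
Variables (F : fieldType) (T : finType).

(* The rows of [tmx_of A] are the columns of [A]. *)
Definition tmx_of (A : T -> T -> F) : 'M[F]_#|T| :=
  \matrix_(k, l) A (enum_val l) (enum_val k).
Definition row_of (v : T -> F) : 'rV[F]_#|T| := \row_k v (enum_val k).

Lemma rangeP (A : T -> T -> F) (v : T -> F) :
  (exists w, forall i, v i = \sum_j A i j * w j) <-> (row_of v <= tmx_of A)%MS.
Proof.
split=> [[w vAw]|/submxP[W vWA]].
  apply/submxP; exists (row_of w); apply/rowP => k.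
  rewrite !mxE vAw -sum_enum_val; apply: eq_bigr => l _.
  by rewrite !mxE mulrC.
exists (fun j => W 0 (enum_rank j)) => i.
move/rowP: vWA => /(_ (enum_rank i)); rewrite !mxE enum_rankK => ->.
rewrite -[RHS]sum_enum_val; apply: eq_bigr => l _.
by rewrite !mxE enum_rankK enum_valK mulrC.
Qed.

Lemma lker_mulmx (A B : T -> T -> F) :
  (forall u : T -> F, (forall j, \sum_i u i * A i j = 0) ->
     forall j, \sum_i u i * B i j = 0) ->
  forall p (M : 'M_(#|T|, p)), tmx_of A *m M = 0 -> tmx_of B *m M = 0.
Proof.
move=> lkerAB p M AM0; apply/matrixP => k l; rewrite !mxE.
have lkerA j : \sum_i M (enum_rank i) l * A i j = 0.
  move/matrixP: AM0 => /(_ (enum_rank j) l); rewrite !mxE => AM0.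
  rewrite -[RHS]AM0 -sum_enum_val; apply: eq_bigr => m _.
  by rewrite !mxE enum_rankK enum_valK mulrC.
rewrite -[RHS](lkerAB _ lkerA (enum_val k)) -[RHS]sum_enum_val.
by apply: eq_bigr => m _; rewrite !mxE enum_valK mulrC.
Qed.

Lemma range_sub_of_lker (A B : T -> T -> F) (v : T -> F) :
  (forall u : T -> F, (forall j, \sum_i u i * A i j = 0) ->
     forall j, \sum_i u i * B i j = 0) ->
  (exists w, forall i, v i = \sum_j B i j * w j) ->
  exists w, forall i, v i = \sum_j A i j * w j.
Proof.
move=> lkerAB /rangeP vB; apply/rangeP; apply: submx_trans vB _.
by rewrite submxE; apply/eqP; apply: lker_mulmx (mulmx_coker _).
Qed.

End RangeInclusion.

Section Glue.
Variables (N : nat) (d : 'I_N -> nat).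

Lemma restrP (S : {set 'I_N}) (i j : Idx d) :
  reflect {in S, forall x, i x = j x} (restr S i == restr S j).
Proof.
apply: (iffP eqP) => [ij x xS|ij].
  by move/ffunP: ij => /(_ (exist _ x xS)); rewrite !ffunE.
by apply/ffunP => -[x xS]; rewrite !ffunE /= ij.
Qed.

Variable K : {set 'I_N}.

Definition glue (a c : Idx d) : Idx d :=
  [ffun x => if x \in K then a x else c x].

Lemma glueE a c x : glue a c x = if x \in K then a x else c x.
Proof. by rewrite ffunE. Qed.

Lemma restr_glue a c : restr K (glue a c) = restr K a.
Proof. by apply/eqP/restrP => x xK; rewrite glueE xK. Qed.

Lemma restrC_glue a c : restr (~: K) (glue a c) = restr (~: K) c.
Proof. by apply/eqP/restrP => x; rewrite inE glueE => /negbTE ->. Qed.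

Lemma eq_glue a c j :
  (j == glue a c) = (restr K j == restr K a) && (restr (~: K) j == restr (~: K) c).
Proof.
apply/eqP/andP => [->|[/restrP jaK /restrP jcKc]].
  by rewrite restr_glue restrC_glue.
apply/ffunP => x; rewrite glueE; case: ifP => xK; first exact: jaK.
by apply: jcKc; rewrite inE xK.
Qed.

Lemma glue_gluer a b c : glue a (glue b c) = glue a c.
Proof. by apply/ffunP => x; rewrite !glueE; case: (x \in K). Qed.

Lemma glue_restr a i : restr K a = restr K i -> glue a i = i.
Proof.
by move/eqP/restrP => aiK; apply/ffunP => x; rewrite glueE; case: ifP => // /aiK.
Qed.

End Glue.

Lemma sum_if_pred1 (V : nmodType) (T : finType) (P : bool) (g : T) (F : T -> V) :
  \sum_j (if P then (if j == g then F j else 0) else 0) = if P then F g else 0.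
Proof. by case: P; [rewrite -big_mkcond big_pred1_eq | rewrite big1]. Qed.

Section Marginal.
Variables (C : numClosedFieldType) (N : nat) (d : 'I_N -> nat) (K : {set 'I_N}).
Local Notation rK := (restr K).
Local Notation rKc := (restr (~: K)).
Local Notation glue := (glue K).
Local Notation tensorI_ptrace S := (@tensorI C N d K (@ptrace C N d K S)).

Section PartialTraceForm.
Variable e : Idx d.

(* A configuration of the complement of [K] is represented by the unique index
   carrying it whose restriction to [K] is that of [e]. *)
Definition rep (c : Idx d) := rK c == rK e.

Lemma rep_restrC a m : rep m && (rKc a == rKc m) = (m == glue e a).
Proof. by rewrite eq_glue [rKc a == _]eq_sym. Qed.

Lemma sum_rep_restrC (a b : Idx d) (X : C) :
  \sum_(m | rep m) (if rKc a == rKc m then if rKc b == rKc m then X else 0 else 0)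
  = if rKc a == rKc b then X else 0.
Proof.
rewrite -big_mkcondr (big_pred1 (glue e a)); last by move=> m; rewrite rep_restrC.
by rewrite restrC_glue eq_sym.
Qed.

(* [shift z c m] is [(I (x) |m><c|) z], with [|m><c|] acting on the complement of [K]. *)
Definition shift (z : vec C d) (c m : Idx d) : vec C d :=
  fun a => if rKc a == rKc m then z (glue a c) else 0.

Lemma sum_shift_diag (z : vec C d) i : \sum_(c | rep c) shift z c c i = z i.
Proof.
rewrite /shift -big_mkcondr (big_pred1 (glue e i)); last by move=> m; rewrite rep_restrC.
by rewrite glue_gluer glue_restr.
Qed.

Lemma qform_tensorI_ptrace_term (S : op C d) (z : vec C d) i j :
  (z i)^* * tensorI_ptrace S i j * z j =
  \sum_a \sum_b (if rKc a == rKc b then (if rK i == rK a then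
      (if j == glue b i then (z i)^* * S a b * z j else 0) else 0) else 0).
Proof.
rewrite /tensorI /ptrace; case: ifP => ij_Kc.
  rewrite mulr_sumr mulr_suml; apply: eq_bigr => a _.
  rewrite mulr_sumr mulr_suml big_mkcond; apply: eq_bigr => b _.
  rewrite eq_glue [rKc j == _]eq_sym ij_Kc andbT [rK i == _]eq_sym [rK j == _]eq_sym.
  by case: (rK a == rK i); case: (rK b == rK j); case: (rKc a == rKc b) => /=;
     rewrite ?mulr0 ?mul0r.
rewrite mulr0 mul0r big1 // => a _; rewrite big1 // => b _.
by rewrite eq_glue [rKc j == _]eq_sym ij_Kc andbF !if_same.
Qed.

Lemma qform_tensorI_ptraceE (S : op C d) (z : vec C d) :
  qform (tensorI_ptrace S) z z =
  \sum_a \sum_b (if rKc a == rKc b then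
     \sum_(c | rep c) (z (glue a c))^* * S a b * z (glue b c) else 0).
Proof.
rewrite /qform.
under eq_bigr => i _ do under eq_bigr => j _ do rewrite qform_tensorI_ptrace_term.
under eq_bigr => i _ do rewrite exchange_big.
under eq_bigr => i _ do under eq_bigr => a _ do rewrite exchange_big.
rewrite exchange_big; under eq_bigr => a _ do rewrite exchange_big.
apply: eq_bigr => a _; apply: eq_bigr => b _.
case: ifP => ab_Kc; last by rewrite big1 // => i _; rewrite big1.
under eq_bigr => i _ do rewrite sum_if_pred1.
rewrite -big_mkcond /= (reindex_onto (glue a) (glue e)); last first.
  by move=> i /eqP ie; rewrite glue_gluer glue_restr.
apply: eq_big => [c|c _]; last by rewrite glue_gluer.
by rewrite restr_glue eqxx glue_gluer /= eq_sym eq_glue eqxx andbT.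
Qed.

Lemma sum_qform_shiftE (S : op C d) (z : vec C d) :
  \sum_(c | rep c) \sum_(m | rep m) qform S (shift z c m) (shift z c m) =
  \sum_a \sum_b (if rKc a == rKc b then
     \sum_(c | rep c) (z (glue a c))^* * S a b * z (glue b c) else 0).
Proof.
rewrite /qform /shift.
have term c m a b : (if rKc a == rKc m then z (glue a c) else 0)^* * S a b *
      (if rKc b == rKc m then z (glue b c) else 0) =
   if rKc a == rKc m then if rKc b == rKc m then
     (z (glue a c))^* * S a b * z (glue b c) else 0 else 0.
  by case: (rKc a == rKc m); case: (rKc b == rKc m); rewrite ?rmorph0 ?mulr0 ?mul0r.
under eq_bigr => c _ do under eq_bigr => m _ do
  under eq_bigr => a _ do under eq_bigr => b _ do rewrite term.
under eq_bigr => c _ do rewrite exchange_big.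
under eq_bigr => c _ do under eq_bigr => a _ do rewrite exchange_big.
under eq_bigr => c _ do under eq_bigr => a _ do under eq_bigr => b _ do
  rewrite sum_rep_restrC.
rewrite exchange_big; under eq_bigr => a _ do rewrite exchange_big.
by apply: eq_bigr => a _; apply: eq_bigr => b _; case: ifP => //; rewrite big1.
Qed.

Lemma qform_tensorI_ptrace (S : op C d) (z : vec C d) :
  qform (tensorI_ptrace S) z z =
  \sum_(c | rep c) \sum_(m | rep m) qform S (shift z c m) (shift z c m).
Proof. by rewrite qform_tensorI_ptraceE sum_qform_shiftE. Qed.

End PartialTraceForm.

Lemma lker_tensorI_ptrace (S : op C d) (u : vec C d) : psd S ->
  (forall j, \sum_i u i * tensorI_ptrace S i j = 0) -> forall j, \sum_i u i * S i j = 0.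
Proof.
move=> S_psd lker_u j.
pose z i := (u i)^*.
have zTz0 : qform (tensorI_ptrace S) z z = 0.
  rewrite /qform exchange_big big1 // => k _.
  under eq_bigr => i _ do rewrite /z conjCK.
  by rewrite -mulr_suml lker_u mul0r.
have shift0 c : rep j c -> qform S (shift z c c) (shift z c c) = 0.
  move=> rep_c; rewrite (qform_tensorI_ptrace j) in zTz0.
  have /psumr_eq0P/(_ zTz0 c rep_c)/psumr_eq0P : forall c, rep j c ->
      0 <= \sum_(m | rep j m) qform S (shift z c m) (shift z c m).
    by move=> c' _; apply: sumr_ge0 => m _; exact: S_psd.
  by apply => // m _; exact: S_psd.
transitivity (\sum_(c | rep j c) qform S (shift z c c) (fun k => (k == j)%:R)).
  rewrite exchange_big; apply: eq_bigr => i _.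
  rewrite -[u i]conjCK -/(z i) -(sum_shift_diag j) rmorph_sum mulr_suml.
  apply: eq_bigr => c _.
  by rewrite (bigD1 j) //= eqxx mulr1 big1 ?addr0 // => k /negbTE ->; rewrite mulr0.
by rewrite big1 // => c rep_c; apply: qform_isotropic (shift0 c rep_c).
Qed.

Lemma in_supp_tensorI_ptrace (S : op C d) (v : vec C d) :
  psd S -> in_supp S v -> in_supp (tensorI_ptrace S) v.
Proof.
move=> S_psd; apply: range_sub_of_lker => u; exact: lker_tensorI_ptrace.
Qed.

End Marginal.

Theorem mainTheorem1 (C : numClosedFieldType) (N : nat) (d : 'I_N -> nat)
  (Ns : {set {set 'I_N}}) (rho : op C d) :
  neighborhood_structure Ns -> nontrivial Ns -> density rho ->
  forall sigma : op C d, joining Ns rho sigma ->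
  forall v : vec C d, in_supp sigma v -> in_DQLS Ns rho v.
Proof.
move=> _ _ _ sigma [[sigma_psd _] same_marginals] v v_supp K K_Ns.
have [w vTw] := in_supp_tensorI_ptrace K sigma_psd v_supp.
exists w => i; rewrite vTw; apply: eq_bigr => j _.
by rewrite /tensorI (same_marginals K K_Ns).
Qed.
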